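(* Let a witness (W, P, \Phi) be given, where W: \mathcal{N} \to \mathcal{E} assigns an invariant to every program location. The program is instrumented by inserting, at every location n with W n different from the trivial invariant true, a statement \mathrm{unassume}(W\,n). This statement is a no-op in the concrete semantics. In the abstract semantics it is interpreted by a sound abstract unassume operator, i.e. an operator satisfying \gamma\,d \subseteq \gamma(\llbracket \mathrm{unassume}_V(e) \rrbracket^\sharp d) for all d \in \mathbb{D}. Let \sigma_W: \mathcal{N} \to \mathbb{D} be the result of analyzing the instrumented program with an abstract interpreter that is sound for the original program. Suppose this analysis confirms the property \Phi, and suppose every invariant W\,n abstractly evaluates to true in \sigma_W. Then the witness is valid: every invariant W\,n holds at location n in every concrete execution of the original program, and the program satisfies \Phi.
   Context: Programs are abstractly interpreted over an abstract domain \mathbb{D} with concretization \gamma. The set of program locations is \mathcal{N}, and \mathcal{E} is the language of invariant expressions. A witness (W, P, \Phi) consists of W: \mathcal{N} \to \mathcal{E}, mapping locations to claimed invariants, together with the program P and the property \Phi that is claimed to hold. *)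

From mathcomp Require Import all_boot.
Set Implicit Arguments. Unset Strict Implicit. Unset Printing Implicit Defensive.

(* N : program locations, S : concrete states, A : primitive statements. *)
Record cfg (N S A : Type) := CFG {
  entry : N;
  init  : S -> Prop;
  edge  : N -> A -> N -> Prop
}.

Inductive reach (N S A : Type) (step : A -> S -> S -> Prop) (P : cfg N S A)
  : N -> S -> Prop :=
| reach_init s : init P s -> reach step P (entry P) s
| reach_step u a v s s' :
    reach step P u s -> edge P u a v -> step a s s' -> reach step P v s'.

Inductive stmt (E : Type) := Skip | Unassume of E.
Arguments Skip {E}.

Definition exec_stmt (S E : Type) (st : stmt E) (s s' : S) : Prop :=
  match st with
  | Skip => s' = s
  | Unassume _ => s' = s
  end.

Record iprog (N S A E : Type) := IProg {
  iprog_cfg : cfg N S A;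
  node_stmt : N -> stmt E
}.

Inductive ireach (N S A E : Type) (step : A -> S -> S -> Prop)
  (Q : iprog N S A E) : N -> S -> Prop :=
| ireach_init s s' :
    init (iprog_cfg Q) s ->
    exec_stmt (node_stmt Q (entry (iprog_cfg Q))) s s' ->
    ireach step Q (entry (iprog_cfg Q)) s'
| ireach_step u a v s s' s'' :
    ireach step Q u s -> edge (iprog_cfg Q) u a v -> step a s s' ->
    exec_stmt (node_stmt Q v) s' s'' -> ireach step Q v s''.

Definition instrument (N S A : Type) (E : eqType) (etrue : E)
  (P : cfg N S A) (W : N -> E) : iprog N S A E :=
  IProg P (fun n => if W n == etrue then Skip else Unassume (W n)).

Definition sound_unassume (S D E : Type) (gamma : D -> S -> Prop)
  (unassume : E -> D -> D) : Prop :=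
  forall e d s, gamma d s -> gamma (unassume e d) s.

(* An abstract interpreter, parametrized by the abstract interpretation of
   unassume statements, is sound for the original program P if, whenever
   unassume is interpreted soundly, its result over-approximates the
   concrete collecting semantics of P instrumented with any statements. *)
Definition interp_sound (N S A E D : Type) (step : A -> S -> S -> Prop)
  (gamma : D -> S -> Prop)
  (analyze : (E -> D -> D) -> iprog N S A E -> N -> D) (P : cfg N S A) : Prop :=
  forall unassume, sound_unassume gamma unassume ->
  forall (ns : N -> stmt E) n s,
    ireach step (IProg P ns) n s -> gamma (analyze unassume (IProg P ns) n) s.

Definition sound_aeval (S D E : Type) (gamma : D -> S -> Prop)
  (holds : E -> S -> Prop) (aeval_true : E -> D -> bool) : Prop :=
  forall e d s, aeval_true e d -> gamma d s -> holds e s.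

Definition sound_check (N S D : Type) (gamma : D -> S -> Prop)
  (Phi : (N -> S -> Prop) -> Prop) (check : (N -> D) -> bool) : Prop :=
  forall (sigma : N -> D) (R : N -> S -> Prop),
    check sigma -> (forall n s, R n s -> gamma (sigma n) s) -> Phi R.

Definition valid_witness (N S A E : Type) (step : A -> S -> S -> Prop)
  (holds : E -> S -> Prop) (W : N -> E) (P : cfg N S A)
  (Phi : (N -> S -> Prop) -> Prop) : Prop :=
  (forall n s, reach step P n s -> holds (W n) s) /\ Phi (reach step P).

From mathcomp Require Import all_boot.
Set Implicit Arguments. Unset Strict Implicit. Unset Printing Implicit Defensive.

(* Unassume is a no-op concretely, so every state reachable in the original
   program is reachable in the instrumented one.  Soundness of the analyzer therefore
   makes sigma_W over-approximate the collecting semantics of the original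
   program, and the sound checks transfer the abstract verdicts to it. *)

Lemma exec_stmtE (S E : Type) (st : stmt E) (s s' : S) :
  exec_stmt st s s' <-> s' = s.
Proof. by case: st. Qed.

Lemma reach_ireach (N S A E : Type) (step : A -> S -> S -> Prop) (P : cfg N S A)
    (ns : N -> stmt E) n s :
  reach step P n s -> ireach step (IProg P ns) n s.
Proof.
elim=> [s0 Hinit | u a v s0 s1 _ IH Huv Hstep].
  by apply: (ireach_init step (Q := IProg P ns) Hinit); apply/exec_stmtE.
by apply: (ireach_step IH Huv Hstep); apply/exec_stmtE.
Qed.

Lemma interp_sound_reach (N S A E D : Type) (step : A -> S -> S -> Prop)
    (gamma : D -> S -> Prop) (analyze : (E -> D -> D) -> iprog N S A E -> N -> D)
    (P : cfg N S A) (unassume : E -> D -> D) (ns : N -> stmt E) :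
  interp_sound step gamma analyze P -> sound_unassume gamma unassume ->
  forall n s, reach step P n s -> gamma (analyze unassume (IProg P ns) n) s.
Proof.
move=> Hinterp Hunassume n s Hreach.
exact: Hinterp Hunassume ns n s (reach_ireach ns Hreach).
Qed.

Theorem mainTheorem1
  (N S A : Type) (E : eqType) (D : Type)
  (step : A -> S -> S -> Prop)          (* concrete semantics of statements *)
  (holds : E -> S -> Prop)              (* concrete truth of expressions *)
  (etrue : E)                           (* the trivial invariant true *)
  (gamma : D -> S -> Prop)              (* concretization *)
  (unassume : E -> D -> D)              (* abstract unassume operator *)
  (aeval_true : E -> D -> bool)         (* abstract evaluation to true *)
  (analyze : (E -> D -> D) -> iprog N S A E -> N -> D) (* abstract interpreter *)
  (check : (N -> D) -> bool)            (* abstract check of Phi *)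
  (W : N -> E) (P : cfg N S A) (Phi : (N -> S -> Prop) -> Prop)
  (Hetrue : forall s, holds etrue s)
  (Hunassume : sound_unassume gamma unassume)
  (Hinterp : interp_sound step gamma analyze P)
  (Haeval : sound_aeval gamma holds aeval_true)
  (Hcheck : sound_check gamma Phi check)
  (Hconfirm : check (analyze unassume (instrument etrue P W)))
  (Hinv : forall n, aeval_true (W n) (analyze unassume (instrument etrue P W) n)) :
  valid_witness step holds W P Phi.
Proof.
have sigmaW_sound := interp_sound_reach
  (fun n => if W n == etrue then Skip else Unassume (W n)) Hinterp Hunassume.
split; last exact: Hcheck Hconfirm sigmaW_sound.
by move=> n s /sigmaW_sound; apply: Haeval.
Qed.
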